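(* Let $q \in \mathbb{Z}_{\geqslant 1}$. For any real $x \geqslant 1$, $$\sum_{\substack{n \leqslant x \\ q \mid n}} \mu(n) \sum_{\substack{k \leqslant x/n \\ k \mid n^\infty}} 1 = \sum_{\substack{n \leqslant x \\ q \mid \gamma(n)}} (-1)^{\omega(n)}.$$
   Context: $\mu$ is the Möbius function, $\omega(n)$ the number of distinct prime factors of $n$, $\gamma(n) := \prod_{p \mid n} p$ the squarefree kernel of $n$, and $k \mid n^\infty$ means that every prime factor of $k$ is a prime factor of $n$. Sums run over positive integers. *)

From mathcomp Require Import all_boot all_order all_algebra.
Set Implicit Arguments. Unset Strict Implicit. Unset Printing Implicit Defensive.
Import Order.TTheory GRing.Theory Num.Theory.

Definition omega (n : nat) : nat := size (primes n).

Definition gamma (n : nat) : nat := \prod_(p <- primes n) p.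

Definition squarefree (n : nat) : bool := all (fun p => logn p n <= 1) (primes n).

Definition mu (n : nat) : int :=
  if squarefree n then ((-1) ^+ omega n)%R else 0%R.

(* k | n^oo : every prime factor of k is a prime factor of n *)
Definition dvd_pow_infty (k n : nat) : bool :=
  all (fun p => p \in primes n) (primes k).

From mathcomp Require Import all_boot all_order all_algebra.
From mathcomp Require Import reals.

Set Implicit Arguments.
Unset Strict Implicit.
Unset Printing Implicit Defensive.
Import Order.TTheory GRing.Theory Num.Theory.

(* For squarefree n, the multiples m = k n with k | n^oo are exactly the m
   with gamma m = n.  Swapping the two sums, an integer m <= x therefore
   receives the single contribution mu (gamma m) [q | gamma m], and
   mu (gamma m) = (-1)^(omega m); the terms with mu n = 0 vanish anyway. *)

Lemma prod_primes_gt0 (s : seq nat) : all prime s -> 0 < \prod_(p <- s) p.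
Proof.
elim: s => [|p s IHs] /=; first by rewrite big_nil.
by case/andP=> pr_p pr_s; rewrite big_cons muln_gt0 prime_gt0 // IHs.
Qed.

Lemma all_prime_primes n : all prime (primes n).
Proof. by apply/allP => p; rewrite mem_primes => /andP[]. Qed.

Lemma gamma_gt0 n : 0 < gamma n.
Proof. exact/prod_primes_gt0/all_prime_primes. Qed.

Lemma primes_prod_sorted (s : seq nat) : all prime s -> sorted ltn s ->
  primes (\prod_(p <- s) p) = s.
Proof.
move=> pr_s lt_s; apply: (irr_sorted_eq ltn_trans ltnn); rewrite ?sorted_primes // => p.
rewrite mem_primes prod_primes_gt0 //=.
have [pr_p|npr_p] /= := boolP (prime p); last first.
  by apply/esym/negP => /(allP pr_s); apply/negP.
rewrite Euclid_dvd_prod // big_has; apply/hasP/idP => [[r r_s]|p_s]; last by exists p.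
by rewrite (dvdn_prime2 pr_p (allP pr_s r r_s)) => /eqP ->.
Qed.

Lemma primes_gamma n : primes (gamma n) = primes n.
Proof. exact/primes_prod_sorted/sorted_primes/all_prime_primes. Qed.

Lemma logn_prod_primes p (s : seq nat) : all prime s ->
  logn p (\prod_(r <- s) r) = count_mem p s.
Proof.
elim: s => [|r s IHs] /=; first by rewrite big_nil logn1.
case/andP=> pr_r pr_s; rewrite big_cons lognM ?prod_primes_gt0 ?prime_gt0 //.
by rewrite IHs // logn_prime // eq_sym.
Qed.

Lemma squarefree_gamma n : squarefree (gamma n).
Proof.
apply/allP => p _; rewrite /gamma logn_prod_primes ?all_prime_primes //.
by rewrite count_uniq_mem ?leq_b1 ?primes_uniq.
Qed.

Lemma mu_gamma n : mu (gamma n) = ((-1) ^+ omega n)%R.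
Proof. by rewrite /mu squarefree_gamma /omega primes_gamma. Qed.

Lemma mu_eq0 n : (mu n == 0%R) = ~~ squarefree n.
Proof.
rewrite /mu; case: ifP => //= _.
by rewrite expf_eq0 oppr_eq0 oner_eq0 andbF.
Qed.

Lemma prod_primes_logn n : 0 < n -> \prod_(p <- primes n) p ^ logn p n = n.
Proof. by move=> n_gt0; rewrite [RHS](prod_prime_decomp n_gt0) prime_decompE big_map. Qed.

Lemma gamma_squarefree n : 0 < n -> squarefree n -> gamma n = n.
Proof.
move=> n_gt0 /allP sq_n; rewrite -[RHS](prod_primes_logn n_gt0).
apply: eq_big_seq => p p_n; suff -> : logn p n = 1 by [].
by apply/eqP; rewrite eqn_leq sq_n // logn_gt0.
Qed.

Lemma gamma_dvdn n : 0 < n -> gamma n %| n.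
Proof.
move=> n_gt0; rewrite -[X in _ %| X](prod_primes_logn n_gt0) /gamma.
rewrite big_seq [X in _ %| X]big_seq.
apply: (big_ind2 (fun a b => a %| b)) => // [a b c d|p p_n]; first exact: dvdn_mul.
by rewrite dvdn_exp // logn_gt0.
Qed.

Lemma dvd_pow_infty_quotient_gamma n m : 0 < n -> squarefree n -> 0 < m ->
  (n %| m) && dvd_pow_infty (m %/ n) n = (gamma m == n).
Proof.
move=> n_gt0 sq_n m_gt0; apply/andP/eqP => [[n_m /allP k_n]|gamma_m].
  have k_gt0 : 0 < m %/ n by rewrite divn_gt0 // dvdn_leq.
  rewrite -(gamma_squarefree n_gt0 sq_n) /gamma.
  congr (\prod_(p <- _) p); apply/eq_primes => p.
  rewrite -{1}(divnK n_m) primesM //.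
  by apply/orP/idP => [[/k_n|]|] //; right.
have n_m : n %| m by rewrite -gamma_m gamma_dvdn.
have k_gt0 : 0 < m %/ n by rewrite divn_gt0 // dvdn_leq.
split=> //; apply/allP => p p_k.
by rewrite -gamma_m primes_gamma -(divnK n_m) primesM // p_k.
Qed.

Local Open Scope ring_scope.

Lemma sum_multiples (V : nmodType) (P : pred nat) (F : nat -> V) n N :
  (0 < n)%N ->
  \sum_(1 <= k < N.+1 | (k * n <= N)%N && P k) F k
  = \sum_(1 <= m < N.+1 | (n %| m)%N && P (m %/ n)%N) F (m %/ n)%N.
Proof.
move=> n_gt0; pose G k := if P k then F k else 0.
transitivity (\sum_(1 <= k < N.+1) \sum_(1 <= m < N.+1)
    (if (m == k * n)%N then G k else 0)).
  rewrite big_mkcond; apply: eq_big_nat => k /andP[k_gt0 _].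
  rewrite -big_mkcond big_nat1_eq ltnS muln_gt0 k_gt0 n_gt0 /G.
  by case: (_ <= N)%N; case: (P k).
rewrite exchange_big_nat [RHS]big_mkcond; apply: eq_big_nat => m /andP[m_gt0 m_le].
have eq_mul k : (m == k * n)%N = (n %| m)%N && (k == m %/ n)%N.
  apply/eqP/andP => [->|[n_m /eqP ->]]; last by rewrite divnK.
  by rewrite dvdn_mull // mulnK.
rewrite -big_mkcond; under eq_bigl do rewrite eq_mul.
have [n_m|_] /= := boolP (n %| m)%N; last by rewrite big_pred0.
rewrite big_nat1_eq divn_gt0 // dvdn_leq //= ltnS.
by rewrite (leq_trans (leq_div m n)) // /G; case: (P _).
Qed.

Lemma sum_mu_gamma_fibre q m N : (0 < m <= N)%N ->
  \sum_(1 <= n < N.+1 | (q %| n)%N && ((n %| m)%N && dvd_pow_infty (m %/ n) n)) mu n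
  = if (q %| gamma m)%N then (-1) ^+ omega m else 0.
Proof.
case/andP=> m_gt0 m_le.
transitivity (\sum_(1 <= n < N.+1 | n == gamma m) (if (q %| n)%N then mu n else 0)).
  rewrite big_mkcond [RHS]big_mkcond; apply: eq_big_nat => n /andP[n_gt0 _].
  have [mu_n0|] := eqVneq (mu n) 0; first by rewrite mu_n0 !if_same.
  rewrite mu_eq0 negbK => sq_n.
  rewrite dvd_pow_infty_quotient_gamma // [gamma m == n]eq_sym.
  by case: (q %| n)%N; case: (n == gamma m).
rewrite big_nat1_eq gamma_gt0 ltnS mu_gamma.
by rewrite (leq_trans (dvdn_leq m_gt0 (gamma_dvdn m_gt0))).
Qed.

Lemma sum_mu_count_dvd_pow_infty q N :
  \sum_(1 <= n < N.+1 | (q %| n)%N)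
     (mu n * \sum_(1 <= k < N.+1 | (k * n <= N)%N && dvd_pow_infty k n) 1)
  = \sum_(1 <= m < N.+1 | (q %| gamma m)%N) (-1) ^+ omega m.
Proof.
transitivity (\sum_(1 <= n < N.+1) \sum_(1 <= m < N.+1)
  (if (q %| n)%N && ((n %| m)%N && dvd_pow_infty (m %/ n) n) then mu n else 0)).
  rewrite big_mkcond; apply: eq_big_nat => n /andP[n_gt0 _].
  rewrite (sum_multiples (fun k => dvd_pow_infty k n)) //.
  have [q_n|_] /= := boolP (q %| n)%N; last by rewrite big1.
  by rewrite mulr_sumr big_mkcond; apply: eq_bigr => m _; case: ifP; rewrite ?mulr1 ?mulr0.
rewrite exchange_big_nat [RHS]big_mkcond; apply: eq_big_nat => m m_range.
by rewrite -big_mkcond sum_mu_gamma_fibre.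
Qed.

Theorem lemma3p2 (R : realType) (q : nat) (x : R) :
  (1 <= q)%N -> 1 <= x ->
  \sum_(1 <= n < (Num.truncn x).+1 | (n%:R <= x) && (q %| n)%N)
     (mu n * (\sum_(1 <= k < (Num.truncn x).+1 | (k%:R <= x / n%:R) && dvd_pow_infty k n) 1))
  = \sum_(1 <= n < (Num.truncn x).+1 | (n%:R <= x) && (q %| gamma n)%N)
     ((-1) ^+ omega n : int).
Proof.
move=> _ x_ge1; have x_ge0 : 0 <= x by apply: le_trans x_ge1.
have le_x n : (n%:R <= x) = (n <= Num.truncn x)%N by rewrite truncn_ge_nat.
have drop_le_x (P : pred nat) (F : nat -> int) :
    \sum_(1 <= n < (Num.truncn x).+1 | (n%:R <= x) && P n) F n
    = \sum_(1 <= n < (Num.truncn x).+1 | P n) F n.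
  rewrite big_mkcond [RHS]big_mkcond; apply: eq_big_nat => n /andP[_ n_le].
  by rewrite le_x -ltnS n_le.
rewrite !drop_le_x -sum_mu_count_dvd_pow_infty.
rewrite big_mkcond [RHS]big_mkcond; apply: eq_big_nat => n /andP[n_gt0 _].
case: ifP => // _; congr (_ * _); apply: eq_bigl => k.
by rewrite ler_pdivlMr ?ltr0n // -natrM le_x.
Qed.
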